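(* Let $\mathcal{O}$ be any finite set of regular control flow operations (possibly including the operations of GKAT: if-then-else, sequential composition, while-do). Then there exists $k>0$ such that the guarded language $L_k$ is not generated by $\mathcal{O}$.
   Context: Guarded strings and languages. For finite sets $T$ (primitive tests) and $\Sigma$ (primitive actions), the Boolean expressions $\mathsf{BA}(T)$ are generated by $b ::= \mathsf{false}\mid\mathsf{true}\mid t\ (t\in T)\mid b\vee c\mid b\wedge c\mid \overline{b}$. Atoms are $\mathsf{At}_T=2^T$; for $\alpha\in\mathsf{At}_T$, $\alpha\le b$ means $b$ is true under the truth assignment making exactly the tests in $\alpha$ true. KAT expressions $\mathsf{KAT}(\Sigma,T)$: $e::= b\in\mathsf{BA}(T)\mid p\in\Sigma\mid e+f\mid e\cdot f\mid e^*$. A guarded string is a word in $\mathsf{At}_T(\Sigma\,\mathsf{At}_T)^*$; a guarded language is a set of guarded strings. If $w=w'\alpha$ and $x=\alpha x'$, then $w\diamond x=w'\alpha x'$; for guarded languages, $L\diamond K=\{w\diamond x: w\in L,x\in K, w\diamond x\text{ defined}\}$, $L^{(0)}=\mathsf{At}_T$, $L^{(n+1)}=L\diamond L^{(n)}$, $L^{( * )}=\bigcup_n L^{(n)}$. The language of a KAT expression: $L(b)=\{\alpha:\alpha\le b\}$, $L(p)=\{\alpha p\beta:\alpha,\beta\in\mathsf{At}_T\}$, $L(e+f)=L(e)\cup L(f)$, $L(ef)=L(e)\diamond L(f)$, $L(e^* )=L(e)^{( * )}$. $\mathcal{G}(\Sigma,T)$ denotes the set of guarded languages that are regular (as languages over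 the finite alphabet $\mathsf{At}_T\cup\Sigma$). A guarded language $L$ is deterministic if for all distinct $w,w'\in L$: (i) $w$ is not a proper prefix of $w'$, and (ii) the first position where $w$ and $w'$ differ is an atom. Substitution. Given maps $\mathfrak{s}:\Sigma_0\to\mathcal{G}(\Sigma_1,T_1)$ and $\mathfrak{t}:T_0\to\mathsf{BA}(T_1)$: an atom $\beta\in\mathsf{At}_{T_1}$ is $\mathfrak{t}$-consistent with $\alpha\in\mathsf{At}_{T_0}$ if for all $t\in T_0$, $\alpha\le t$ iff $\beta\le\mathfrak{t}(t)$. For $L$ over $(\Sigma_0,T_0)$, $\mathrm{apply}_{\mathfrak{t}}(L)$ is the set of $\beta_0p_0\beta_1\cdots p_{n-1}\beta_n$ such that some $\alpha_0p_0\alpha_1\cdots p_{n-1}\alpha_n\in L$ has each $\beta_i$ $\mathfrak{t}$-consistent with $\alpha_i$. For $L$ over $(\Sigma_0,T_1)$, $\mathrm{apply}^{\mathfrak{s}}(L)$ is the set of all $\alpha_0\diamond w_0\diamond\alpha_1\diamond\cdots\diamond w_{n-1}\diamond\alpha_n$ with $\alpha_0p_0\alpha_1\cdots p_{n-1}\alpha_n\in L$ and $w_i\in\mathfrak{s}(p_i)$. Put $\mathrm{apply}^{\mathfrak{s}}_{\mathfrak{t}}=\mathrm{apply}^{\mathfrak{s}}\circ\mathrm{apply}_{\mathfrak{t}}$. Regular control flow operations. For $e\in\mathsf{KAT}(\{x_1,\dots,x_n\},\{y_1,\dots,y_m\})$, $O_e$ is the $(n+m)$-ary operation which, for any finite $\Sigma,T$,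 takes $L_1,\dots,L_n\in\mathcal{G}(\Sigma,T)$ and $b_1,\dots,b_m\in\mathsf{BA}(T)$ and returns $\mathrm{apply}^{\mathfrak{s}}_{\mathfrak{t}}(L(e))$ where $\mathfrak{s}(x_i)=L_i$, $\mathfrak{t}(y_i)=b_i$. If $L(e)$ is deterministic, $O_e$ is called a (deterministic) regular control flow operation. A set $\mathcal{O}$ of such operations generates $L\in\mathcal{G}(\Sigma,T)$ if $L$ belongs to the smallest set of guarded languages containing $L(p)$ for all $p\in\Sigma$ and $L(b)$ for all $b\in\mathsf{BA}(T)$ and closed under: if $O_e\in\mathcal{O}$ has $n$ language and $m$ test parameters, $L_1,\dots,L_n$ are in the set and $b_1,\dots,b_m\in\mathsf{BA}(T)$, then $O_e(L_1,\dots,L_n,b_1,\dots,b_m)$ is in the set. The language $L_k$ ($k>0$): $T=\{t_1,\dots,t_k\}$, $\Sigma=\{p_1,\dots,p_k\}$, $\alpha_i=\{t_i\}\in\mathsf{At}_T$. $L_k$ consists of all guarded strings $\alpha_{i_1}\,p_1\,\alpha_{i_2}\,p_{i_1}\,\alpha_{i_3}\,p_{i_2}\cdots\alpha_{i_n}\,p_{i_{n-1}}\,\alpha_{i_n}$ with $n\ge1$, each $i_j\in\{1,\dots,k\}$, $i_1\ne1$, and $i_j\ne i_{j+1}$ for all $j<n$ (i.e. the $j$-th atom $\alpha_{i_j}$, $j\le n$, is followed by action $p_{i_{j-1}}$ with $i_0=1$, and the string ends with the atom $\alpha_{i_n}$ repeated). *)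

From Stdlib Require List.
From mathcomp Require Import all_boot.
Set Implicit Arguments. Unset Strict Implicit. Unset Printing Implicit Defensive.

Inductive bexp (T : Type) : Type :=
| BFalse | BTrue | BTest of T
| BOr of bexp T & bexp T | BAnd of bexp T & bexp T | BNot of bexp T.
Arguments BFalse {T}. Arguments BTrue {T}.

Inductive kat (S T : Type) : Type :=
| KTest of bexp T | KAct of S
| KPlus of kat S T & kat S T | KSeq of kat S T & kat S T | KStar of kat S T.

(* Atoms At_T = 2^T are represented by {set T}; alpha <= b is [beval alpha b]. *)
Fixpoint beval (T : finType) (a : {set T}) (b : bexp T) : bool :=
  match b with
  | BFalse => false
  | BTrue => true
  | BTest t => t \in a
  | BOr b c => beval a b || beval a c
  | BAnd b c => beval a b && beval a c
  | BNot b => ~~ beval a b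
  end.

(* A guarded string alpha_0 p_0 alpha_1 ... p_{n-1} alpha_n is represented
   as (alpha_0, [:: (p_0, alpha_1); ...; (p_{n-1}, alpha_n)]). *)
Definition gstring (S : Type) (T : finType) := ({set T} * seq (S * {set T}))%type.
Definition glang (S : Type) (T : finType) := gstring S T -> Prop.

Definition glast S T (w : gstring S T) : {set T} := last w.1 (map snd w.2).

Definition gcat S T (w x v : gstring S T) : Prop :=
  glast w = x.1 /\ v = (w.1, w.2 ++ x.2).

Definition gdiamond S T (L K : glang S T) : glang S T :=
  fun v => exists w x, L w /\ K x /\ gcat w x v.

Fixpoint gpow S T (L : glang S T) (n : nat) : glang S T :=
  match n with
  | 0 => fun w => w.2 = [::]
  | n.+1 => gdiamond L (gpow L n)
  end.

Definition gstar S T (L : glang S T) : glang S T := fun w => exists n, gpow L n w.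

Fixpoint lang S (T : finType) (e : kat S T) : glang S T :=
  match e with
  | KTest b => fun w => w.2 = [::] /\ beval w.1 b
  | KAct p => fun w => exists b, w.2 = [:: (p, b)]
  | KPlus e f => fun w => lang e w \/ lang f w
  | KSeq e f => gdiamond (lang e) (lang f)
  | KStar e => gstar (lang e)
  end.

Section ApplyT.
Variables (S : Type) (T0 T1 : finType) (t : T0 -> bexp T1).

Definition tconsistent (b : {set T1}) (a : {set T0}) : Prop :=
  forall x : T0, (x \in a) = beval b (t x).

Fixpoint tcons_seq (s1 : seq (S * {set T1})) (s0 : seq (S * {set T0})) : Prop :=
  match s1, s0 with
  | [::], [::] => True
  | (p, b) :: s1', (q, a) :: s0' => p = q /\ tconsistent b a /\ tcons_seq s1' s0'
  | _, _ => False
  end.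

Definition apply_t (L : glang S T0) : glang S T1 :=
  fun v => exists u, L u /\ tconsistent v.1 u.1 /\ tcons_seq v.2 u.2.
End ApplyT.

Section ApplyS.
Variables (S0 S1 : Type) (T : finType) (s : S0 -> glang S1 T).

(* srel a l v : v = a <> w_0 <> alpha_1 <> ... <> w_{n-1} <> alpha_n for some
   w_i in s p_i, where (a, l) = alpha_0 p_0 alpha_1 ... p_{n-1} alpha_n *)
Fixpoint srel (a : {set T}) (l : seq (S0 * {set T})) (v : gstring S1 T) : Prop :=
  match l with
  | [::] => v = (a, [::])
  | (p, b) :: l' =>
      exists w v', s p w /\ w.1 = a /\ srel b l' v' /\ gcat w v' v
  end.

Definition apply_s (L : glang S0 T) : glang S1 T :=
  fun v => exists u, L u /\ srel u.1 u.2 v.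
End ApplyS.

(* An operation O_e, e in KAT({x_1..x_n},{y_1..y_m}), with x_i ~ 'I_n, y_j ~ 'I_m *)
Record op := Op { op_n : nat; op_m : nat; op_e : kat 'I_op_n 'I_op_m }.

Definition op_apply (o : op) (S T : finType)
  (Ls : 'I_(op_n o) -> glang S T) (bs : 'I_(op_m o) -> bexp T) : glang S T :=
  apply_s Ls (apply_t bs (lang (op_e o))).

(* guarded strings as words over the alphabet At_T + S *)
Definition word_of (S : Type) (T : finType) (w : gstring S T) : seq ({set T} + S) :=
  inl w.1 :: flatten (map (fun x => [:: inr x.1; inl x.2]) w.2).

Definition isAtom (A B : Type) (x : A + B) : bool := if x is inl _ then true else false.

Definition deterministic (S : eqType) (T : finType) (L : glang S T) : Prop :=
  forall w w', L w -> L w' -> w <> w' ->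
    (forall r, word_of w' = word_of w ++ r -> r = [::]) /\
    (forall c x y r r', word_of w = c ++ x :: r -> word_of w' = c ++ y :: r' ->
        x != y -> isAtom x).

Definition regular (S T : finType) (L : glang S T) : Prop :=
  exists (Q : finType) (q0 : Q) (d : Q -> ({set T} + S) -> Q) (F : pred Q),
    forall u : seq ({set T} + S), (exists w, L w /\ word_of w = u) <-> F (foldl d q0 u).

(* languages (up to extensional equality) generated by the set of operations O *)
Inductive generated (O : list op) (S T : finType) : glang S T -> Prop :=
| gen_act (p : S) (L : glang S T) :
    (forall w, L w <-> lang (KAct T p) w) -> generated O L
| gen_test (b : bexp T) (L : glang S T) :
    (forall w, L w <-> lang (KTest S b) w) -> generated O L
| gen_op (o : op) (Ls : 'I_(op_n o) -> glang S T) (bs : 'I_(op_m o) -> bexp T)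
    (L : glang S T) :
    List.In o O ->
    (forall i, generated O (Ls i)) -> (forall i, regular (Ls i)) ->
    (forall w, L w <-> op_apply Ls bs w) -> generated O L.

(* L_k, with indices shifted to 0..k-1 (t_1,p_1 become index 0):
   alpha_{i1} p_1 alpha_{i2} p_{i1} ... alpha_{in} p_{i_{n-1}} alpha_{in} *)
Definition Lk (k : nat) : glang 'I_k 'I_k :=
  fun w => exists (i1 : 'I_k) (rest : seq 'I_k),
    [/\ val i1 != 0,
        path (fun a b => a != b) i1 rest,
        w.1 = [set i1],
        map (fun x => val x.1) w.2 = 0 :: map val (belast i1 rest)
      & map snd w.2 = map (fun j => [set j]) (rcons rest (last i1 rest))].
Arguments Lk k w : clear implicits.

(* Every language generated by O is deterministic and contains no echo language
   [echo x m], the set of strings {m} x {g1} m {g2} g1 {g3} g2 ... {gn} g(n-1) {gn} in which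
   consecutive atoms differ and each action names the atom preceding the previous one;
   [Lk k] contains [echo 0 1].

   For an operation node O_e(L_1, ..., L_n, b), a string splits into pieces w_i in L_(x_i),
   and determinism of e and of the L_i makes this parse unique along common prefixes.
   Annotating the action occurrences of e with distinct positions makes its language
   closed under exchanging suffixes after an occurrence, so a piece has a key from a finite
   set (its variable and the occurrences usable after the preceding prefix) such that pieces
   with equal keys and end atoms can be exchanged.  If echo x0 m0 is inside the node, call
   y alive at key s when a piece with key s covers a position preceded by atom y.  Cutting
   or branching an echo string inside such a piece shows that when two atoms are alive at
   s, every piece with key s runs to the end of its string; hence one argument L_x contains
   a whole echo language, contradicting induction.  Otherwise each atom g <> m0 is the only
   atom alive at the key of the piece covering the second position of {m0} x0 {g} m0 {g},
   so there are at least #|A| - 1 keys, which fails once k is large. *)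

From Stdlib Require List.
From mathcomp Require Import all_boot boolp zify.
Set Implicit Arguments. Unset Strict Implicit. Unset Printing Implicit Defensive.

Lemma cat_eq_cases (A : Type) (l1 l2 s1 s2 : seq A) :
  l1 ++ s1 = l2 ++ s2 -> exists d, l2 = l1 ++ d \/ l1 = l2 ++ d.
Proof.
elim: l1 l2 => [|y l1 IH] [|z l2] /=.
- by exists [::]; left.
- by exists (z :: l2); left.
- by exists (y :: l1); right.
- by case=> -> /IH [d [->|->]]; exists d; [left|right].
Qed.

Lemma cat_injl (A : Type) (s : seq A) : injective (cat s).
Proof. by move=> x y /(congr1 (drop (size s))); rewrite !drop_size_cat. Qed.

Lemma cat_prefix (A : Type) (l1 l2 s1 s2 : seq A) :
  l1 ++ s1 = l2 ++ s2 -> size l1 <= size l2 -> exists d, l2 = l1 ++ d.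
Proof.
move=> /cat_eq_cases [d [E|E]]; first by exists d.
by rewrite E size_cat; case: d E => [|? ?] E; [exists [::]; rewrite !cats0 | rewrite /=; lia].
Qed.

Lemma drop_cons (A : Type) (l : seq A) t : t < size l -> exists y r, drop t l = y :: r.
Proof.
by case E: (drop t l) => [|y r]; [move: (size_drop t l); rewrite E /=; lia | exists y, r].
Qed.

Lemma cat_eq_size (A : Type) (s1 s2 t1 t2 : seq A) :
  size s1 = size t1 -> s1 ++ s2 = t1 ++ t2 -> s1 = t1 /\ s2 = t2.
Proof.
move=> Es E; split.
  by move/(congr1 (take (size s1))): E; rewrite take_size_cat // Es take_size_cat.
by move/(congr1 (drop (size s1))): E; rewrite drop_size_cat // Es drop_size_cat.
Qed.

Lemma cat_eq_mid (A : Type) (l1 l2 c r : seq A) y :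
  l1 ++ l2 = c ++ y :: r ->
  (exists r', l1 = c ++ y :: r' /\ r = r' ++ l2) \/
  (exists c', l2 = c' ++ y :: r /\ c = l1 ++ c').
Proof.
elim: l1 c => [|z l1 IH] [|z' c] //=; try by move=> E; right; exists (z' :: c).
- by move=> ->; right; exists [::].
- by case=> <- <-; left; exists l1.
- by case=> <- /IH [[r' [-> ->]]|[c' [-> ->]]]; [left; exists r'|right; exists c'].
Qed.

Lemma cat_eq_seq1 (A : Type) (c r : seq A) y z :
  c ++ y :: r = [:: z] -> [/\ c = [::], y = z & r = [::]].
Proof. by case: c => [[-> ->]|? [|? ?] []]. Qed.

Lemma map_eq_mid (A B : Type) (f : A -> B) (l : seq A) c y r :
  map f l = c ++ y :: r ->
  exists c' y' r', [/\ l = c' ++ y' :: r', map f c' = c, f y' = y & map f r' = r].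
Proof.
elim: c l => [|z c IH] [|a l] //= [<-]; first by move=> <-; exists [::], a, l.
by move=> /IH [c' [y' [r' [-> <- <- <-]]]]; exists (a :: c'), y', r'.
Qed.

Section GuardedStrings.
Variables (S : Type) (T : finType).
Implicit Types (L : glang S T) (a b : {set T}) (l c r : seq (S * {set T})).

Lemma glast_cat a l1 l2 : glast (a, l1 ++ l2) = glast (glast (a, l1), l2).
Proof. by rewrite /glast /= map_cat last_cat. Qed.

Record gdet L : Prop := GDet {
  gdet_prefix : forall a l r, L (a, l) -> L (a, l ++ r) -> r = [::];
  gdet_action : forall a c p q b b' r r',
    L (a, c ++ (p, b) :: r) -> L (a, c ++ (q, b') :: r') -> p = q }.

Lemma gdet_ext L L' : (forall w, L w <-> L' w) -> gdet L' -> gdet L.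
Proof.
move=> E [D1 D2]; split=> [a l r /E H1 /E H2|a c p q b b' r r' /E H1 /E H2].
- exact: D1 H1 H2.
- exact: D2 H1 H2.
Qed.

Lemma gdet_cat_eq L a l1 l2 s1 s2 :
  gdet L -> L (a, l1) -> L (a, l2) -> l1 ++ s1 = l2 ++ s2 -> l1 = l2.
Proof.
move=> [D _] H1 H2 /cat_eq_cases [d [E|E]].
- by move: H2; rewrite E => /(D _ _ _ H1) d0; rewrite d0 cats0.
- by move: H1; rewrite E => /(D _ _ _ H2) d0; rewrite d0 cats0.
Qed.

End GuardedStrings.

Lemma word_of_cat (S : Type) (T : finType) (a : {set T}) (l1 l2 : seq (S * {set T})) :
  word_of (a, l1 ++ l2) = word_of (a, l1) ++ behead (word_of (a, l2)).
Proof. by rewrite /word_of /= map_cat flatten_cat. Qed.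

Lemma deterministic_gdet (S : eqType) (T : finType) (L : glang S T) :
  deterministic L -> gdet L.
Proof.
move=> D; split=> [a l [//|y r] H1 H2|a c p q b b' r r' H1 H2].
- have ne : (a, l) <> (a, l ++ y :: r).
    by case=> /(congr1 size); rewrite size_cat /=; lia.
  have [prefix _] := D _ _ H1 H2 ne.
  by have := prefix _ (word_of_cat a l (y :: r)).
- case: (eqVneq p q) => [//|npq].
  have ne : (a, c ++ (p, b) :: r) <> (a, c ++ (q, b') :: r').
    by case=> /eqP; rewrite eqseq_cat // => /andP [_ /eqP [/eqP]]; rewrite (negPf npq).
  have [_ first_diff] := D _ _ H1 H2 ne.
  by have := first_diff _ _ _ _ _ (word_of_cat a c _) (word_of_cat a c _);
    rewrite (inj_eq inr_inj) npq => /(_ isT).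
Qed.

Section ApplyTest.
Variables (S : Type) (T0 T1 : finType) (t : T0 -> bexp T1).

Definition tatom (b : {set T1}) : {set T0} := [set x | beval b (t x)].
Definition tseq (l : seq (S * {set T1})) : seq (S * {set T0}) :=
  map (fun pb => (pb.1, tatom pb.2)) l.

Lemma tconsistentE b a : tconsistent t b a <-> a = tatom b.
Proof.
split=> [H|-> x]; last by rewrite inE.
by apply/setP => x; rewrite inE H.
Qed.

Lemma tcons_seqE l1 l0 : tcons_seq t l1 l0 <-> l0 = tseq l1.
Proof.
elim: l1 l0 => [|[p b] l1 IH] [|[q a] l0] //=.
split=> [[-> [/tconsistentE -> /IH ->]] //|[-> -> /IH H]].
by split=> //; split=> //; apply/tconsistentE.
Qed.

Lemma apply_tE (L : glang S T0) v : apply_t t L v <-> L (tatom v.1, tseq v.2).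
Proof.
split=> [[u [Lu [/tconsistentE E1 /tcons_seqE E2]]]|H].
  by rewrite -E1 -E2 -surjective_pairing.
by exists (tatom v.1, tseq v.2); split=> //; split; [apply/tconsistentE|apply/tcons_seqE].
Qed.

Lemma gdet_apply_t (L : glang S T0) : gdet L -> gdet (apply_t t L).
Proof.
move=> [D1 D2].
split=> [a l r /apply_tE H1 /apply_tE H2|a c p q b b' r r' /apply_tE H1 /apply_tE H2].
- by move: H2; rewrite /tseq /= map_cat => /(D1 _ _ _ H1); case: (r).
- by move: H1 H2; rewrite /tseq /= !map_cat /=; apply: D2.
Qed.

End ApplyTest.

(** * Exchanging suffixes after an action occurrence *)

Section SwapClosed.
Variables (S : Type) (T : finType).
Implicit Types (L : glang S T) (A : pred S).

Definition swap_closed L := forall a1 c1 q b1 r1 a2 c2 b2 r2,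
  L (a1, c1 ++ (q, b1) :: r1) -> L (a2, c2 ++ (q, b2) :: r2) -> L (a1, c1 ++ (q, b2) :: r2).

Definition acts_in L A := forall w, L w -> all (fun pb => A pb.1) w.2.

Lemma acts_in_mid L A a c q b r : acts_in L A -> L (a, c ++ (q, b) :: r) -> A q.
Proof. by move=> HA /HA; rewrite all_cat /= => /and3P []. Qed.

Variables (L1 L2 : glang S T) (A1 A2 : pred S).
Hypotheses (L1A : acts_in L1 A1) (L2A : acts_in L2 A2).
Hypothesis A12 : forall q, A1 q -> A2 q -> False.

Lemma swap_closed_union : swap_closed L1 -> swap_closed L2 -> swap_closed (fun w => L1 w \/ L2 w).
Proof.
move=> S1 S2 a1 c1 q b1 r1 a2 c2 b2 r2 [H1|H1] [H2|H2].
- by left; apply: S1 H1 H2.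
- by case: (A12 (acts_in_mid L1A H1) (acts_in_mid L2A H2)).
- by case: (A12 (acts_in_mid L1A H2) (acts_in_mid L2A H1)).
- by right; apply: S2 H1 H2.
Qed.

Lemma swap_closed_diamond : swap_closed L1 -> swap_closed L2 -> swap_closed (gdiamond L1 L2).
Proof.
move=> S1 S2 a1 c1 q b1 r1 a2 c2 b2 r2.
move=> [x1 [y1 [Hx1 [Hy1 [E1 Ev1]]]]] [x2 [y2 [Hx2 [Hy2 [E2 Ev2]]]]].
case: Ev1 Ev2 => Ea1 Ev1 [_ Ev2].
have [[r' [Ex1 Er1]]|[c' [Ey1 Ec1]]] := cat_eq_mid (esym Ev1);
have [[r'' [Ex2 Er2]]|[c'' [Ey2 Ec2]]] := cat_eq_mid (esym Ev2).
- exists (x1.1, c1 ++ (q, b2) :: r''), y2; split.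
    by apply: (S1 _ _ _ b1 r' x2.1 c2); rewrite -?Ex1 -?Ex2 -surjective_pairing.
  split=> //; split; last by rewrite Ea1 Er2 /= -catA.
  by rewrite -E2 (surjective_pairing x2) Ex2 !glast_cat.
- move: Hx1 Hy2; rewrite (surjective_pairing x1) (surjective_pairing y2) Ex1 Ey2.
  by move=> /(acts_in_mid L1A) /A12 HA /(acts_in_mid L2A) /HA.
- move: Hx2 Hy1; rewrite (surjective_pairing x2) (surjective_pairing y1) Ex2 Ey1.
  by move=> /(acts_in_mid L1A) /A12 HA /(acts_in_mid L2A) /HA.
- exists x1, (y1.1, c' ++ (q, b2) :: r2); split=> //; split.
    by apply: (S2 _ _ _ b1 r1 y2.1 c''); rewrite -?Ey1 -?Ey2 -surjective_pairing.
  by split=> //; rewrite Ea1 Ec1 /= catA.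
Qed.

End SwapClosed.

Section Star.
Variables (S : Type) (T : finType) (L : glang S T).

Lemma gstar_step w x v : L w -> gstar L x -> gcat w x v -> gstar L v.
Proof. by move=> Lw [n Hx] Hv; exists n.+1, w, x. Qed.

Lemma gstar_suffix a c q b r : gstar L (a, c ++ (q, b) :: r) ->
  exists w cw rw z, [/\ L w, w.2 = cw ++ (q, b) :: rw, gstar L z, glast w = z.1 & r = rw ++ z.2].
Proof.
move=> [n]; elim: n a c => [|n IH] a c /=; first by case: c.
move=> [w [x [Lw [Hx [E Ev]]]]]; case: Ev => _ Ev.
have [[r' [Ew ->]]|[c' [Ex _]]] := cat_eq_mid (esym Ev).
  by exists w, c, r', x; split=> //; exists n.
by apply: (IH x.1 c'); rewrite -Ex -surjective_pairing.
Qed.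

Lemma swap_closed_star : swap_closed L -> swap_closed (gstar L).
Proof.
move=> SL a1 c1 q b1 r1 a2 c2 b2 r2 [n H1] /gstar_suffix [w [cw [rw [z [Lw Ew Hz Ez ->]]]]].
elim: n a1 c1 r1 H1 => [|n IH] a1 c1 r1 /=; first by case: c1.
move=> [w1 [x1 [Lw1 [Hx1 [E1 Ev]]]]]; case: Ev => -> Ev.
have [[r' [Ew1 _]]|[c' [Ex1 ->]]] := cat_eq_mid (esym Ev).
- apply: (gstar_step (w := (w1.1, c1 ++ (q, b2) :: rw)) _ Hz).
    by apply: (SL _ _ _ b1 r' w.1 cw); rewrite -?Ew1 -?Ew -surjective_pairing.
  by split; [rewrite -Ez (surjective_pairing w) Ew !glast_cat | rewrite /= -catA].
- apply: (gstar_step Lw1 (IH x1.1 c' r1 _)); first by rewrite -Ex1 -surjective_pairing.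
  by split=> //; rewrite /= catA.
Qed.

End Star.

Section Relabel.
Variables (S S' : Type) (T : finType) (f : S -> S').

Definition relabel (l : seq (S * {set T})) : seq (S' * {set T}) := map (fun pb => (f pb.1, pb.2)) l.

Definition relabel_image (L : glang S T) : glang S' T :=
  fun w => exists w', L w' /\ w = (w'.1, relabel w'.2).

Fixpoint kmap (e : kat S T) : kat S' T :=
  match e with
  | KTest b => KTest S' b
  | KAct p => KAct T (f p)
  | KPlus e1 e2 => KPlus (kmap e1) (kmap e2)
  | KSeq e1 e2 => KSeq (kmap e1) (kmap e2)
  | KStar e1 => KStar (kmap e1)
  end.

Lemma glast_relabel a l : glast (a, relabel l) = glast (a, l).
Proof. by rewrite /glast /= -map_comp. Qed.

Lemma relabel_image_diamond (L1 K1 : glang S T) (L2 K2 : glang S' T) :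
  (forall w, L2 w <-> relabel_image L1 w) -> (forall w, K2 w <-> relabel_image K1 w) ->
  forall w, gdiamond L2 K2 w <-> relabel_image (gdiamond L1 K1) w.
Proof.
move=> HL HK w; split.
- move=> [x [y [/HL [x' [Hx' ->]] [/HK [y' [Hy' ->]] [E ->]]]]].
  exists (x'.1, x'.2 ++ y'.2); split; last by rewrite /relabel map_cat.
  by exists x', y'; move: E; rewrite glast_relabel -surjective_pairing.
- move=> [_ [[x' [y' [Hx' [Hy' [E ->]]]]] ->]].
  exists (x'.1, relabel x'.2), (y'.1, relabel y'.2); split; first by apply/HL; exists x'.
  split; first by apply/HK; exists y'.
  by split; rewrite ?glast_relabel // /relabel map_cat.
Qed.

Lemma lang_kmap e w : lang (kmap e) w <-> relabel_image (lang e) w.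
Proof.
elim: e w => [b|p|e1 IH1 e2 IH2|e1 IH1 e2 IH2|e1 IH1] w /=.
- split=> [[E Hb]|[w' [[E Hb] ->]]]; last by rewrite E.
  by exists (w.1, [::]); split=> //; rewrite /= -E -surjective_pairing.
- split=> [[b E]|[w' [[b E] ->]]]; last by exists b; rewrite E.
  by exists (w.1, [:: (p, b)]); split; [exists b|rewrite /= -E -surjective_pairing].
- rewrite IH1 IH2; split=> [[[w' [H ->]]|[w' [H ->]]]|[w' [[H|H] ->]]].
  + by exists w'; split=> //; left.
  + by exists w'; split=> //; right.
  + by left; exists w'.
  + by right; exists w'.
- exact: relabel_image_diamond.
- have Hpow n v : gpow (lang (kmap e1)) n v <-> relabel_image (gpow (lang e1) n) v.
    elim: n v => [|n IH] v /=; last exact: relabel_image_diamond.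
    split=> [E|[w' [E ->]]]; last by rewrite E.
    by exists (v.1, [::]); split=> //; rewrite /= -E -surjective_pairing.
  split=> [[n /Hpow [w' [H ->]]]|[w' [[n H] ->]]]; first by exists w'; split=> //; exists n.
  by exists n; apply/Hpow; exists w'.
Qed.

End Relabel.

Section Annotate.
Variables (S : Type) (T : finType).

Fixpoint nacts (e : kat S T) : nat :=
  match e with
  | KTest _ => 0
  | KAct _ => 1
  | KPlus e1 e2 | KSeq e1 e2 => nacts e1 + nacts e2
  | KStar e1 => nacts e1
  end.

Fixpoint annotate (e : kat S T) (off : nat) : kat (S * nat) T :=
  match e with
  | KTest b => KTest (S * nat) b
  | KAct p => KAct T (p, off)
  | KPlus e1 e2 => KPlus (annotate e1 off) (annotate e2 (off + nacts e1))
  | KSeq e1 e2 => KSeq (annotate e1 off) (annotate e2 (off + nacts e1))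
  | KStar e1 => KStar (annotate e1 off)
  end.

Lemma kmap_annotate e off : kmap fst (annotate e off) = e.
Proof. by elim: e off => //= [e1 IH1 e2 IH2|e1 IH1 e2 IH2|e1 IH1] off; rewrite ?IH1 ?IH2. Qed.

Definition ann_range off n : pred (S * nat) := fun q => off <= q.2 < off + n.

Lemma acts_in_annotate e off : acts_in (lang (annotate e off)) (ann_range off (nacts e)).
Proof.
have widen off1 n1 off2 n2 pb : off2 <= off1 -> off1 + n1 <= off2 + n2 ->
    ann_range off1 n1 pb.1 -> ann_range off2 n2 pb.1.
  by rewrite /ann_range => h1 h2 /andP [h3 h4]; apply/andP; lia.
elim: e off => [b|p|e1 IH1 e2 IH2|e1 IH1 e2 IH2|e1 IH1] off w /=.
- by move=> [->].
- by move=> [b ->] /=; rewrite /ann_range /= leqnn addn1 ltnSn.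
- by move=> [/IH1|/IH2]; apply: sub_all => pb; apply: widen; lia.
- move=> [x [y [/IH1 Hx [/IH2 Hy [_ ->]]]]].
  by rewrite all_cat (sub_all _ Hx) ?(sub_all _ Hy) // => pb; apply: widen; lia.
- move=> [n]; elim: n w => [|n IH] w /=; first by move=> ->.
  by move=> [x [y [/IH1 Hx [/IH Hy [_ ->]]]]]; rewrite all_cat Hx Hy.
Qed.

Lemma swap_closed_annotate e off : swap_closed (lang (annotate e off)).
Proof.
have disj off1 n1 n2 q : ann_range off1 n1 q -> ann_range (off1 + n1) n2 q -> False.
  by rewrite /ann_range => /andP [_ h1] /andP [h2 _]; lia.
elim: e off => [b|p|e1 IH1 e2 IH2|e1 IH1 e2 IH2|e1 IH1] off /=.
- by move=> a1 c1 q b1 r1 a2 c2 b2 r2 [/= E _]; case: c1 E.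
- move=> a1 c1 q b1 r1 a2 c2 b2 r2 [? /= E1] [? /= E2].
  have [-> Eq _] := cat_eq_seq1 E1; have [_ _ ->] := cat_eq_seq1 E2.
  by exists b2; case: Eq => ->.
- exact: (swap_closed_union (@acts_in_annotate e1 off) (@acts_in_annotate e2 _) (@disj _ _ _)
    (IH1 _) (IH2 _)).
- exact: (swap_closed_diamond (@acts_in_annotate e1 off) (@acts_in_annotate e2 _) (@disj _ _ _)
    (IH1 _) (IH2 _)).
- exact: swap_closed_star (IH1 _).
Qed.

End Annotate.

Section Occurrences.
Variables (S : Type) (T : finType) (e : kat S T).

Definition occ (a : {set T}) (c : seq (S * {set T})) (x : S) : {set 'I_(nacts e)} :=
  [set i | `[< exists c' b r, relabel fst c' = c /\
                 lang (annotate e 0) (a, c' ++ ((x, val i), b) :: r) >] ].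

Lemma occ_swap a1 c1 a2 c2 x b r : occ a2 c2 x \subset occ a1 c1 x ->
  lang e (a2, c2 ++ (x, b) :: r) -> lang e (a1, c1 ++ (x, b) :: r).
Proof.
have LK := lang_kmap fst (annotate e 0); rewrite kmap_annotate in LK.
move=> sub /LK [[a l] [H Ew]]; case: Ew H => <- /esym El H.
have [c' [[[x' i] b'] [r' [El' Ec Ey <-]]]] := map_eq_mid El.
case: Ey El' => -> -> El'; rewrite El' in H; rewrite -Ec in sub.
have /andP [_ i_lt] := acts_in_mid (@acts_in_annotate _ _ e 0) H; rewrite add0n in i_lt.
have /(subsetP sub) : Ordinal i_lt \in occ a2 (relabel fst c') x.
  by rewrite inE; apply/asboolP; exists c', b, r'.
rewrite inE => /asboolP [c1' [b1 [r1 [<- H1]]]].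
apply/LK; exists (a1, c1' ++ ((x, i), b) :: r'); split.
  exact: swap_closed_annotate H1 H.
by rewrite /relabel map_cat.
Qed.

End Occurrences.

Lemma occ_apply_t_swap (S : Type) (T0 T1 : finType) (e : kat S T0) (bs : T0 -> bexp T1)
    a1 c1 a2 c2 x b r :
  occ e (tatom bs a1) (tseq bs c1) x = occ e (tatom bs a2) (tseq bs c2) x ->
  apply_t bs (lang e) (a2, c2 ++ (x, b) :: r) -> apply_t bs (lang e) (a1, c1 ++ (x, b) :: r).
Proof.
move=> Eocc /apply_tE H; apply/apply_tE; move: H; rewrite /tseq /= !map_cat /=.
by apply: occ_swap; rewrite -/(tseq _ _) Eocc.
Qed.

(** * Parses of a substitution *)

Section Parses.
Variables (S0 S1 : Type) (T : finType) (Ls : S0 -> glang S1 T).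
Implicit Types (ps qs : seq (S0 * gstring S1 T)) (a : {set T}).

Fixpoint chain a ps : Prop :=
  if ps is (x, w) :: ps' then [/\ Ls x w, w.1 = a & chain (glast w) ps'] else True.

Definition acts ps : seq (S0 * {set T}) := map (fun xw => (xw.1, glast xw.2)) ps.
Definition flat ps : seq (S1 * {set T}) := flatten (map (fun xw => xw.2.2) ps).

Lemma flat_cons x w ps : flat ((x, w) :: ps) = w.2 ++ flat ps.
Proof. by []. Qed.

Lemma flat_cat ps qs : flat (ps ++ qs) = flat ps ++ flat qs.
Proof. by rewrite /flat map_cat flatten_cat. Qed.

Lemma chain_cat a ps qs : chain a (ps ++ qs) <-> chain a ps /\ chain (glast (a, acts ps)) qs.
Proof.
elim: ps a => [|[x w] ps IH] a /=; first by split=> [|[]].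
by split=> [[? ? /IH []]|[[? ? ?] ?]]; split=> //; apply/IH.
Qed.

Lemma glast_flat a ps : chain a ps -> glast (a, flat ps) = glast (a, acts ps).
Proof.
elim: ps a => [//|[x w] ps IH] a /= [_ Ew /IH E].
by rewrite glast_cat /= -Ew -surjective_pairing E.
Qed.

Lemma chain_mid a Ps x w Qs : chain a (Ps ++ (x, w) :: Qs) ->
  [/\ Ls x w, w.1 = glast (a, flat Ps) & chain (glast w) Qs].
Proof. by move=> /chain_cat [/glast_flat -> []]. Qed.

Lemma srel_chain a l v :
  srel Ls a l v <-> exists ps, [/\ chain a ps, l = acts ps & v = (a, flat ps)].
Proof.
elim: l a v => [|[x b] l IH] a v /=.
  by split=> [->|[[|? ?] [_ //= _ ->]]]; first by exists [::].
split=> [[w [v' [Lw [Ew [/IH [ps [Hps -> ->]] [Eg ->]]]]]]|].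
  by exists ((x, w) :: ps); rewrite /= Ew Eg.
move=> [[|[x' w] ps] [Hps El ->]] //; case: El Hps => <- -> El [Lw Ew Hps].
exists w, (glast w, flat ps); split=> //; split=> //.
by split; [apply/IH; exists ps | rewrite /= -Ew].
Qed.

Variable E : glang S0 T.
Hypotheses (DE : gdet E) (DL : forall x, gdet (Ls x)).

Lemma chains_common_prefix a U ps1 ps2 P Y1 Y2 :
  E (a, U ++ acts ps1) -> E (a, U ++ acts ps2) ->
  chain (glast (a, U)) ps1 -> chain (glast (a, U)) ps2 ->
  flat ps1 = P ++ Y1 -> flat ps2 = P ++ Y2 -> Y2 <> [::] ->
  exists Ps x w1 w2 Qs1 Qs2 P',
    [/\ ps1 = Ps ++ (x, w1) :: Qs1, ps2 = Ps ++ (x, w2) :: Qs2, P = flat Ps ++ P',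
        size P' < size w1.2 & size P' < size w2.2].
Proof.
elim: ps1 U ps2 P => [|[x w1] ps1 IH] U [|[x' w2] ps2] P H1 H2 C1 C2 F1 F2 Y2n0.
- by case: P F1 F2 => // _ F2; case: Y2n0; case: Y2 F2.
- by move: H1; rewrite cats0 => /(gdet_prefix DE) /(_ H2).
- by move: H2; rewrite cats0 => /(gdet_prefix DE) /(_ H1).
have /= Ex := gdet_action DE H1 H2; subst x'.
case: C1 C2 => [L1 Ew1 C1] [L2 Ew2 C2]; rewrite !flat_cons in F1 F2.
have same_piece : size w1.2 <= size P \/ size w2.2 <= size P -> w1 = w2.
  move=> Hs; suff E12 : w1.2 = w2.2.
    by rewrite (surjective_pairing w1) (surjective_pairing w2) Ew1 Ew2 E12.
  move: L1 L2; rewrite (surjective_pairing w1) (surjective_pairing w2) Ew1 Ew2 => L1 L2.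
  case: Hs => Hs.
    have [P1 EP] := cat_prefix F1 Hs.
    by apply: (gdet_cat_eq (s1 := P1 ++ Y2) (s2 := flat ps2) (DL x) L1 L2); rewrite F2 EP catA.
  have [P1 EP] := cat_prefix F2 Hs.
  by apply/esym/(gdet_cat_eq (s1 := P1 ++ Y1) (s2 := flat ps1) (DL x) L2 L1); rewrite F1 EP catA.
case: (ltnP (size P) (size w1.2)) => h1; case: (ltnP (size P) (size w2.2)) => h2.
- by exists [::], x, w1, w2, ps1, ps2, P.
- by move: h1; rewrite (same_piece (or_intror h2)) ltnNge h2.
- by move: h2; rewrite -(same_piece (or_introl h1)) ltnNge h1.
move: F2 C2 H2; rewrite -(same_piece (or_introl h1)) => F2 C2 H2.
have [P1 EP] := cat_prefix F1 h1.
have [Ps [x'' [v1 [v2 [Qs1 [Qs2 [P' [-> -> EP1 s1 s2]]]]]]]] :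
  exists Ps x'' v1 v2 Qs1 Qs2 P',
    [/\ ps1 = Ps ++ (x'', v1) :: Qs1, ps2 = Ps ++ (x'', v2) :: Qs2, P1 = flat Ps ++ P',
        size P' < size v1.2 & size P' < size v2.2].
  apply: (IH (U ++ [:: (x, glast w1)])); rewrite -?catA ?glast_cat //.
  - by apply/(@cat_injl _ w1.2); rewrite F1 EP catA.
  - by apply/(@cat_injl _ w1.2); rewrite F2 EP catA.
by exists ((x, w1) :: Ps), x'', v1, v2, Qs1, Qs2, P'; rewrite EP EP1 catA.
Qed.

Definition parse (v : gstring S1 T) ps := [/\ chain v.1 ps, E (v.1, acts ps) & v.2 = flat ps].

Lemma apply_sE v : apply_s Ls E v <-> exists ps, parse v ps.
Proof.
split=> [[u [Eu /srel_chain [ps [Hps Eacts Ev]]]]|[ps [Hps Eps Ev]]].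
  by exists ps; rewrite /parse Ev -Eacts -surjective_pairing.
exists (v.1, acts ps); split=> //; apply/srel_chain; exists ps.
by rewrite -Ev -surjective_pairing.
Qed.

Lemma parse_node v ps : parse v ps -> apply_s Ls E v.
Proof. by move=> H; apply/apply_sE; exists ps. Qed.

Lemma parse_piece v Ps x w Qs : parse v (Ps ++ (x, w) :: Qs) ->
  [/\ Ls x w, w.1 = glast (v.1, flat Ps), glast w = glast (v.1, flat Ps ++ w.2)
    & v.2 = flat Ps ++ w.2 ++ flat Qs].
Proof.
move=> [/chain_mid [Lw Ew _] _ ->]; split=> //; last by rewrite flat_cat.
by rewrite glast_cat -Ew -surjective_pairing.
Qed.

Lemma parses_common_prefix v1 v2 ps1 ps2 P Y1 Y2 :
  parse v1 ps1 -> parse v2 ps2 -> v1.1 = v2.1 -> v1.2 = P ++ Y1 -> v2.2 = P ++ Y2 -> Y2 <> [::] ->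
  exists Ps x w1 w2 Qs1 Qs2 P',
    [/\ ps1 = Ps ++ (x, w1) :: Qs1, ps2 = Ps ++ (x, w2) :: Qs2, P = flat Ps ++ P',
        size P' < size w1.2 & size P' < size w2.2].
Proof.
move=> [C1 H1 F1] [C2 H2 F2] Ea; rewrite F1 F2 -Ea in C2 H2 *.
exact: (chains_common_prefix (U := [::]) H1 H2 C1 C2).
Qed.

Definition covers ps t Ps x w Qs :=
  ps = Ps ++ (x, w) :: Qs /\ size (flat Ps) <= t < size (flat Ps) + size w.2.

Lemma covers_uniq ps t Ps x w Qs Ps' x' w' Qs' :
  covers ps t Ps x w Qs -> covers ps t Ps' x' w' Qs' -> [/\ Ps = Ps', x = x', w = w' & Qs = Qs'].
Proof.
move=> [-> h] [Eps h']; elim: Ps Ps' t Eps h h' => [|[y u] Ps IH] [|[y' u'] Ps'] t /=.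
- by case=> -> -> ->.
- by case=> _ <- _; rewrite flat_cons size_cat; lia.
- by case=> _ <- _; rewrite flat_cons size_cat; lia.
rewrite !flat_cons !size_cat => -[<- <- /IH {}IH] h h'.
by have [-> -> -> ->] := IH (t - size u.2) ltac:(lia) ltac:(lia).
Qed.

Lemma covers_exists ps t : t < size (flat ps) -> exists Ps x w Qs, covers ps t Ps x w Qs.
Proof.
elim: ps t => [//|[x w] ps IH] t; rewrite flat_cons size_cat => ht.
case: (ltnP t (size w.2)) => h; first by exists [::], x, w, ps.
have [Ps [y [u [Qs [-> h']]]]] := IH (t - size w.2) ltac:(lia).
by exists ((x, w) :: Ps), y, u, Qs; split=> //; move: h'; rewrite flat_cons size_cat; lia.
Qed.

Lemma covers_common_prefix v1 v2 ps1 ps2 P Y1 Y2 Ps x w Qs :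
  parse v1 ps1 -> parse v2 ps2 -> v1.1 = v2.1 -> v1.2 = P ++ Y1 -> v2.2 = P ++ Y2 -> Y2 <> [::] ->
  covers ps1 (size P) Ps x w Qs -> exists w2 Qs2, covers ps2 (size P) Ps x w2 Qs2.
Proof.
move=> H1 H2 Ea F1 F2 Y2n0 cov.
have [Ps' [x' [w1 [w2 [Qs1 [Qs2 [P' [E1 E2 EP s1 s2]]]]]]]] :=
  parses_common_prefix H1 H2 Ea F1 F2 Y2n0.
have cov' : covers ps1 (size P) Ps' x' w1 Qs1 by split=> //; rewrite EP size_cat; lia.
have [-> -> _ _] := covers_uniq cov cov'.
by exists w2, Qs2; split=> //; rewrite EP size_cat; lia.
Qed.

Lemma gdet_apply_s : gdet (apply_s Ls E).
Proof.
split=> [a l r|a c p q b b' r r'] /apply_sE [ps1 H1] /apply_sE [ps2 H2].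
  case: r H2 => [//|y r] H2; exfalso.
  have [Ps [x [w1 [w2 [Qs1 [Qs2 [P' [E1 _ EP s1 _]]]]]]]] :=
    parses_common_prefix H1 H2 erefl (esym (cats0 l)) erefl (nesym (@List.nil_cons _ _ _)).
  move: H1; rewrite E1 => /parse_piece [_ _ _]; rewrite /= EP => /cat_injl /(congr1 size).
  by rewrite size_cat; lia.
have [Ps [x [w1 [w2 [Qs1 [Qs2 [P' [E1 E2 EP s1 s2]]]]]]]] :=
  parses_common_prefix H1 H2 erefl erefl erefl (nesym (@List.nil_cons _ _ _)).
move: H1 H2; rewrite E1 E2 => /parse_piece [L1 Ew1 _ F1] /parse_piece [L2 Ew2 _ F2].
rewrite /= EP -catA in F1; rewrite /= EP -catA in F2.
move/cat_injl: F1 => F1; move/cat_injl: F2 => F2.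
have [[d1 [Ed1 _]]|[? [_ EPs]]] := cat_eq_mid (esym F1).
  2: by move: s1; rewrite EPs size_cat; lia.
have [[d2 [Ed2 _]]|[? [_ EPs]]] := cat_eq_mid (esym F2).
  2: by move: s2; rewrite EPs size_cat; lia.
apply: (gdet_action (DL x) (a := w1.1) (c := P') (b := b) (b' := b') (r := d1) (r' := d2)).
  by rewrite -Ed1 -surjective_pairing.
by rewrite Ew1 /= -Ew2 -Ed2 -surjective_pairing.
Qed.

End Parses.

(** * Echo languages *)

Section Echo.
Variable A : finType.
Implicit Types (x m g y z : A) (l P Q : seq (A * {set A})).

Inductive echo_seq x m : seq (A * {set A}) -> Prop :=
| echo_end : echo_seq x m [:: (x, [set m])]
| echo_step g l : g != m -> echo_seq m g l -> echo_seq x m ((x, [set g]) :: l).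

Definition echo x m : glang A A := fun v => v.1 = [set m] /\ echo_seq x m v.2.

Definition echo_free (L : glang A A) := forall x m, ~ (forall v, echo x m v -> L v).

Lemma echo_seq_consE x m p c l : echo_seq x m ((p, c) :: l) ->
  p = x /\ (l = [::] /\ c = [set m] \/ exists g, [/\ c = [set g], g != m & echo_seq m g l]).
Proof. by move=> H; inversion H; subst; split=> //; [left | right; exists g]. Qed.

Lemma echo_seq_head x m p c l : echo_seq x m ((p, c) :: l) -> p = x.
Proof. by case/echo_seq_consE. Qed.

Lemma echo_seq_nil x m : ~ echo_seq x m [::].
Proof. by move=> H; inversion H. Qed.

Lemma echo_seq_cat x m P Q : echo_seq x m (P ++ Q) -> Q <> [::] ->
  exists x' m', [/\ glast ([set m], P) = [set m'], echo_seq x' m' Q &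
    forall Q', echo_seq x' m' Q' -> echo_seq x m (P ++ Q')].
Proof.
elim: P x m => [|[p c] P IH] x m /=; first by move=> H _; exists x, m.
move=> /echo_seq_consE [-> [[El _]|[g [-> gm /IH Hl]]]] Qn0.
  by case: (P) El => // /Qn0.
have [x' [m' [E1 H1 H2]]] := Hl Qn0.
by exists x', m'; split=> // Q' /H2; apply: echo_step.
Qed.

Lemma echo_seq_atom x m P Q : echo_seq x m (P ++ Q) -> Q <> [::] ->
  exists y, glast ([set m], P) = [set y].
Proof. by move=> /echo_seq_cat H /H [_ [y [E _ _]]]; exists y. Qed.

Lemma echo_seq_stop x m P p c l : echo_seq x m (P ++ (p, c) :: l) ->
  echo_seq x m (P ++ [:: (p, glast ([set m], P))]).
Proof.
move=> /echo_seq_cat /(_ (nesym (@List.nil_cons _ _ _))) [x' [m' [-> H1 H2]]].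
by apply: H2; rewrite (echo_seq_head H1); apply: echo_end.
Qed.

Lemma echo_seq_branch x m P p c l y z : echo_seq x m (P ++ (p, c) :: l) ->
  glast ([set m], P) = [set y] -> z != y ->
  echo_seq x m (P ++ [:: (p, [set z]); (y, [set z])]).
Proof.
move=> /echo_seq_cat /(_ (nesym (@List.nil_cons _ _ _))) [x' [m' [-> H1 H2]]] /set1_inj <-.
by move=> zy; apply: H2; rewrite (echo_seq_head H1); apply: echo_step => //; apply: echo_end.
Qed.

Lemma echo_seq_path x m l : echo_seq x m l -> exists rest,
  [/\ path (fun a b => a != b) m rest, map fst l = x :: belast m rest
    & map snd l = map (fun j => [set j]) (rcons rest (last m rest))].
Proof.
elim=> {x m l} [x m|x m g l gm _ [rest [H1 H2 H3]]]; first by exists [::].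
by exists (g :: rest); rewrite /= eq_sym gm H2 H3.
Qed.

End Echo.

Section StateSwap.
Variables (S0 S1 : Type) (T : finType) (F : Type).
Variables (Ls : S0 -> glang S1 T) (E : glang S0 T).
Variable state : {set T} -> seq (S0 * {set T}) -> S0 -> F.
Hypothesis E_swap : forall a1 c1 a2 c2 x b r,
  state a1 c1 x = state a2 c2 x -> E (a2, c2 ++ (x, b) :: r) -> E (a1, c1 ++ (x, b) :: r).

Definition key a (Ps : seq (S0 * gstring S1 T)) x : S0 * F := (x, state a (acts Ps) x).

Lemma parse_swap v1 v2 Ps1 x1 w1 Qs1 Ps2 x2 w2 Qs2 :
  parse Ls E v1 (Ps1 ++ (x1, w1) :: Qs1) -> parse Ls E v2 (Ps2 ++ (x2, w2) :: Qs2) ->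
  glast w1 = glast w2 -> key v1.1 Ps1 x1 = key v2.1 Ps2 x2 ->
  apply_s Ls E (v1.1, flat Ps1 ++ w1.2 ++ flat Qs2).
Proof.
move=> [C1 H1 _] [C2 H2 _] Eg [Ex Est]; subst x2; apply/apply_sE.
exists (Ps1 ++ (x1, w1) :: Qs2); split.
- move: C1 C2 => /chain_cat [C1 [Lw1 Ew1 _]] /chain_cat [_ [_ _]]; rewrite -Eg => C2.
  by apply/chain_cat.
- by move: H2; rewrite /acts !map_cat /= -Eg; apply: E_swap.
- by rewrite flat_cat.
Qed.

End StateSwap.

Section EchoNode.
Variables (A X F : finType) (Ls : X -> glang A A) (E : glang X A).
Variable state : {set A} -> seq (X * {set A}) -> X -> F.
Hypotheses (DE : gdet E) (DL : forall x, gdet (Ls x)).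
Hypothesis E_swap : forall a1 c1 a2 c2 x b r,
  state a1 c1 x = state a2 c2 x -> E (a2, c2 ++ (x, b) :: r) -> E (a1, c1 ++ (x, b) :: r).
Hypothesis Ls_free : forall x, echo_free (Ls x).
Hypothesis few_keys : #|{: X * F}| < #|A|.-1.
Variables (x0 m0 : A).
Hypothesis node_echo : forall v, echo x0 m0 v -> apply_s Ls E v.

Local Notation parse := (parse Ls E).
Local Notation key := (key state).

Lemma echo_parse v : echo x0 m0 v -> exists ps, parse v ps.
Proof. by move/node_echo/apply_sE. Qed.

Lemma covers_size v ps t Ps x w Qs : parse v ps -> covers ps t Ps x w Qs -> t < size v.2.
Proof.
move=> H [Eps h]; rewrite Eps in H; have [_ _ _ ->] := parse_piece H.
by rewrite !size_cat; lia.
Qed.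

Lemma covers_extend v ps t Ps x w Qs Y : parse v ps -> covers ps t Ps x w Qs -> Y <> [::] ->
  echo x0 m0 (v.1, take t v.2 ++ Y) ->
  exists ps' w' Qs', parse (v.1, take t v.2 ++ Y) ps' /\ covers ps' t Ps x w' Qs'.
Proof.
move=> H cov Yn0 /echo_parse [ps' H']; exists ps'.
have St : size (take t v.2) = t by rewrite size_takel // ltnW // (covers_size H cov).
have cov0 : covers ps (size (take t v.2)) Ps x w Qs by rewrite St.
have [w' [Qs' cov']] :=
  covers_common_prefix DE DL H H' erefl (esym (cat_take_drop t v.2)) erefl Yn0 cov0.
by exists w', Qs'; move: cov'; rewrite St.
Qed.

Definition alive (s : X * F) (y : A) := exists v ps t Ps x w Qs,
  [/\ echo x0 m0 v, parse v ps, covers ps t Ps x w Qs, key v.1 Ps x = s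
    & glast (v.1, take t v.2) = [set y]].

Definition glue (s : X * F) (g r : A) := exists v Ps x w Qs d C,
  [/\ echo x0 m0 v, parse v (Ps ++ (x, w) :: Qs), w.2 <> [::], key v.1 Ps x = s
    & glast w = [set g] /\ flat Qs = (r, d) :: C].

Lemma alive_not_glue s y r : alive s y -> glue s y r -> False.
Proof.
move=> [v [ps [t [Ps [x [w [Qs [[Ev1 Ev2] H cov Ek Ey]]]]]]]].
move=> [vg [Psg [xg [wg [Qsg [d [C [_ Hg _ Ekg [Eg EQ]]]]]]]]].
have St : size (take t v.2) = t by rewrite size_takel // ltnW // (covers_size H cov).
have [[p c] [R ER]] := drop_cons (covers_size H cov).
pose v2 := (v.1, take t v.2 ++ [:: (p, [set y])]).
have ev2 : echo x0 m0 v2.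
  split=> //; rewrite /v2 /= -Ey Ev1; apply: (echo_seq_stop (c := c) (l := R)).
  by rewrite -ER cat_take_drop.
have [ps2 [w2 [Qs2 [H2 [Eps2 h2]]]]] := covers_extend H cov (nesym (@List.nil_cons _ _ _)) ev2.
rewrite Eps2 in H2; have [_ _ Eg2 /= Ev] := parse_piece H2.
have Q0 : flat Qs2 = [::].
  have : size (flat Qs2) = 0 by move/(congr1 size): Ev; rewrite !size_cat /= St; lia.
  by case: (flat Qs2).
have Eg2' : glast w2 = [set y].
  by rewrite Eg2 -(cats0 (_ ++ w2.2)) -Q0 -catA -Ev glast_cat.
have := parse_swap E_swap Hg H2 (etrans Eg (esym Eg2')) (etrans Ekg (esym Ek)).
rewrite Q0 cats0 => /(gdet_prefix (gdet_apply_s DE DL)) prefix_free.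
have [_ _ _ Evg] := parse_piece Hg; have := parse_node Hg.
by rewrite (surjective_pairing vg) Evg EQ catA => /prefix_free.
Qed.

Lemma glue_next_uniq s g r r' : glue s g r -> glue s g r' -> r = r'.
Proof.
move=> [v1 [Ps1 [x1 [w1 [Qs1 [d1 [C1 [_ H1 _ Ek1 [Eg1 EQ1]]]]]]]]].
move=> [v2 [Ps2 [x2 [w2 [Qs2 [d2 [C2 [_ H2 _ Ek2 [Eg2 EQ2]]]]]]]]].
have := parse_swap E_swap H1 H2 (etrans Eg1 (esym Eg2)) (etrans Ek1 (esym Ek2)).
have [_ _ _ Ev1] := parse_piece H1; have := parse_node H1.
rewrite (surjective_pairing v1) Ev1 EQ1 EQ2 !catA /=.
exact: (gdet_action (gdet_apply_s DE DL)).
Qed.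

Lemma alive_branch s y z : alive s y -> z != y -> alive s z \/ glue s z y.
Proof.
move=> [v [ps [t [Ps [x [w [Qs [[Ev1 Ev2] H cov Ek Ey]]]]]]]] zy.
have St : size (take t v.2) = t by rewrite size_takel // ltnW // (covers_size H cov).
have [[p c] [R ER]] := drop_cons (covers_size H cov).
pose v2 := (v.1, take t v.2 ++ [:: (p, [set z]); (y, [set z])]).
have ev2 : echo x0 m0 v2.
  split=> //; apply: (echo_seq_branch (c := c) (l := R)) => //; last by rewrite -Ev1.
  by rewrite -ER cat_take_drop.
have [ps2 [w2 [Qs2 [H2 [Eps2 h2]]]]] := covers_extend H cov (nesym (@List.nil_cons _ _ _)) ev2.
have H2' := H2; rewrite Eps2 in H2'; have [_ _ Eg2 /= Ev] := parse_piece H2'.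
case: (ltnP t.+1 (size (flat Ps) + size w2.2)) => h.
  left; exists v2, ps2, t.+1, Ps, x, w2, Qs2; split=> //; first by split=> //; lia.
  by rewrite /= take_cat St ltnNge leqnSn /= subSnn glast_cat.
have [Ew2 EQ2] : flat Ps ++ w2.2 = take t v.2 ++ [:: (p, [set z])] /\ flat Qs2 = [:: (y, [set z])].
  by apply: cat_eq_size; [rewrite !size_cat St /=; lia | rewrite -catA -Ev -catA].
right; exists v2, Ps, x, w2, Qs2, [set z], [::]; split=> //.
  by case: (w2.2) h2 => //=; rewrite addn0; lia.
by rewrite Eg2 /= Ew2 glast_cat.
Qed.

Lemma alive2_no_glue s y y' g r : alive s y -> alive s y' -> y != y' -> ~ glue s g r.
Proof.
move=> Ay Ay' yy' Gg.
have gy : g != y by apply/eqP => gy; rewrite gy in Gg; exact: alive_not_glue Ay Gg.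
have gy' : g != y' by apply/eqP => gy'; rewrite gy' in Gg; exact: alive_not_glue Ay' Gg.
have [/alive_not_glue /(_ Gg) //|Gy] := alive_branch Ay gy.
have [/alive_not_glue /(_ Gg) //|Gy'] := alive_branch Ay' gy'.
by move: yy'; rewrite (glue_next_uniq Gy Gy') eqxx.
Qed.

Lemma echo_sub_piece s y y' P x' m' :
  alive s y -> alive s y' -> y != y' -> glast ([set m0], P) = [set m'] ->
  (forall v', echo x' m' v' -> echo x0 m0 ([set m0], P ++ v'.2)) ->
  (forall v' ps, echo x' m' v' -> parse ([set m0], P ++ v'.2) ps ->
     exists Ps w Qs, [/\ ps = Ps ++ (s.1, w) :: Qs, flat Ps = P, w.2 <> [::]
                      & key [set m0] Ps s.1 = s]) ->
  forall v', echo x' m' v' -> Ls s.1 v'.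
Proof.
move=> Ay Ay' yy' Em' ext piece v' ev'.
have [ps H] := echo_parse (ext _ ev').
have [Ps [w [Qs [Eps EP wn0 Ek]]]] := piece _ _ ev' H; rewrite Eps in H.
have [Lw Ew Eg Ev] := parse_piece H.
have Q0 : flat Qs = [::].
  case EQ: (flat Qs) => [//|[r d] C]; exfalso.
  have [g Eg'] : exists g, glast ([set m0], flat Ps ++ w.2) = [set g].
    apply: (echo_seq_atom (x := x0) (Q := flat Qs)); last by rewrite EQ.
    by rewrite -catA -Ev; case: (ext _ ev').
  apply: (alive2_no_glue Ay Ay' yy' (g := g) (r := r)).
  exists ([set m0], P ++ v'.2), Ps, s.1, w, Qs, d, C.
  by split=> //; [exact: ext | rewrite Eg].
move: Ev; rewrite Q0 cats0 /= -EP => /cat_injl Ev.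
case: ev' => E1 _; suff -> : v' = w by [].
by rewrite (surjective_pairing v') (surjective_pairing w) Ev Ew E1 /= EP Em'.
Qed.

Lemma echo_first_key : exists s, alive s m0 /\ forall v ps, echo x0 m0 v -> parse v ps ->
  exists Ps w Qs, covers ps 0 Ps s.1 w Qs /\ key v.1 Ps s.1 = s.
Proof.
pose v0 := ([set m0], [:: (x0, [set m0])]).
have e0 : echo x0 m0 v0 by split=> //; apply: echo_end.
have [ps0 H0] := echo_parse e0.
have [Ps [x [w [Qs cov]]]] : exists Ps x w Qs, covers ps0 0 Ps x w Qs.
  by apply: covers_exists; case: H0 => _ _ <-.
exists (key [set m0] Ps x); split; first by exists v0, ps0, 0, Ps, x, w, Qs.
move=> v ps [Ev1 Ev2] H.
have vn0 : v.2 <> [::] by move=> E0; rewrite E0 in Ev2; apply: echo_seq_nil Ev2.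
have [w' [Qs' cov']] :=
  covers_common_prefix DE DL H0 H (P := [::]) (esym Ev1) erefl erefl vn0 cov.
by exists Ps, w', Qs'; rewrite Ev1.
Qed.

Lemma alive_singleton s1 g :
  (forall v ps, echo x0 m0 v -> parse v ps ->
     exists Ps w Qs, covers ps 0 Ps s1.1 w Qs /\ key v.1 Ps s1.1 = s1) ->
  (forall y, alive s1 y -> y = m0) -> g != m0 ->
  exists s, alive s g /\ forall y, alive s y -> y = g.
Proof.
move=> at0 only_m0 gm0.
pose vg := ([set m0], [:: (x0, [set g]); (m0, [set g])]).
have eg : echo x0 m0 vg by split=> //; apply: echo_step => //; apply: echo_end.
have [ps H] := echo_parse eg.
have [Ps [x [w [Qs cov]]]] : exists Ps x w Qs, covers ps 1 Ps x w Qs.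
  by apply: covers_exists; case: H => _ _ <-.
have Ag : alive (key [set m0] Ps x) g by exists vg, ps, 1, Ps, x, w, Qs.
exists (key [set m0] Ps x); split=> // y Ay; apply/eqP; apply: contraT => yg; exfalso.
have EP : flat Ps = [:: (x0, [set g])].
  have S1 : size (flat Ps) = 1.
    case: (cov) => Eps /andP [h1 h2].
    have [h0|] := posnP (size (flat Ps)); last by lia.
    have [Ps0 [w0 [Qs0 [cov0 Ek0]]]] := at0 _ _ eg H.
    have cov0' : covers ps 0 Ps x w Qs by split=> //; apply/andP; lia.
    have [EPs Ex _ _] := covers_uniq cov0 cov0'.
    by move: gm0; rewrite -(only_m0 g) ?eqxx // -Ek0 /= EPs Ex.
  case: (cov) => Eps _; rewrite Eps in H; have [_ _ _ Ev] := parse_piece H.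
  by have [] := cat_eq_size (S1 : size (flat Ps) = size [:: (x0, [set g])]) (esym Ev).
apply: (@Ls_free x m0 g).
apply: (echo_sub_piece (s := key [set m0] Ps x) Ag Ay _ (P := [:: (x0, [set g])])).
- by rewrite eq_sym.
- by [].
- by move=> v' [E1 E2]; split=> //; apply: echo_step.
move=> v' ps' [E1 E2] H'.
have vn0 : v'.2 <> [::] by move=> E0; rewrite E0 in E2; apply: echo_seq_nil E2.
have [w' [Qs' [Eps' h']]] :=
  covers_common_prefix DE DL H H' (P := [:: (x0, [set g])]) erefl erefl erefl vn0 cov.
exists Ps, w', Qs'; split=> //.
by move: h'; rewrite EP /=; case: (w'.2).
Qed.

Lemma echo_node_false : False.
Proof.
have [s1 [A0 at0]] := echo_first_key.
have [[y [ym0 Ay]]|no_other] := pselect (exists y, y != m0 /\ alive s1 y).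
  apply: (@Ls_free s1.1 x0 m0); apply: (echo_sub_piece A0 Ay _ (P := [::])) => //.
  - by rewrite eq_sym.
  - by move=> v [E1 E2].
  move=> v ps [_ ev] H.
  have [Ps [w [Qs [[Eps /andP [h1 h2]] Ek]]]] := at0 ([set m0], v.2) ps (conj erefl ev) H.
  by exists Ps, w, Qs; split=> //; [case: (flat Ps) h1 | case: (w.2) h2 => //=; lia].
have only_m0 y : alive s1 y -> y = m0.
  by move=> Ay; apply/eqP; apply: contraT => ym0; case: no_other; exists y.
have [f Hf] : exists f : A -> X * F,
    forall g, g != m0 -> alive (f g) g /\ forall y, alive (f g) y -> y = g.
  apply: (fin_all_exists (P := fun g s => g != m0 -> alive s g /\ forall y, alive s y -> y = g)).
  move=> g; have [->|gm0] := eqVneq g m0; first by exists s1.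
  by have [s Hs] := alive_singleton at0 only_m0 gm0; exists s.
have f_inj : {in [set~ m0] &, injective f}.
  move=> g g'; rewrite !inE => gm0 g'm0 Ef.
  by apply: (Hf g' g'm0).2; rewrite -Ef; apply: (Hf g gm0).1.
have := max_card [set f g | g in [set~ m0]].
by rewrite card_in_imset // cardsC1 leqNgt few_keys.
Qed.

End EchoNode.

Lemma echo_sub_Lk k (x m : 'I_k) v : val x = 0 -> val m != 0 -> echo x m v -> Lk k v.
Proof.
move=> x_0 m_n0 [E1 /echo_seq_path [rest [H1 H2 H3]]]; exists m, rest; split=> //.
by rewrite -x_0 (map_comp val fst) H2.
Qed.

Section Generated.
Variables (A : finType) (S : Type) (T : finType).

Lemma gdet_act (p : S) : gdet (lang (KAct T p)).
Proof.
split=> [a l r [b1 /= ->] [b2 /=]|a c p1 q b b' r r' [b1 /= E1] [b2 /= E2]]; first by case: r.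
have [_ Ep _] := cat_eq_seq1 E1; have [_ Eq _] := cat_eq_seq1 E2.
by case: Ep Eq => -> _ [->].
Qed.

Lemma gdet_test (b : bexp T) : gdet (lang (KTest S b)).
Proof.
split=> [a l r [/= -> _] [/= E _]|a c p q b1 b1' r r' [/= E _]]; first by case: r E.
by case: c E.
Qed.

Lemma exists_neq (y : A) : 1 < #|A| -> exists g : A, g != y.
Proof.
move=> /card_gt1P [g [g' [_ _ gg']]].
by case: (eqVneq g y) => [gy|]; [exists g'; rewrite -gy eq_sym | exists g].
Qed.

Lemma echo_free_act (p : A) : 1 < #|A| -> echo_free (lang (KAct A p)).
Proof.
move=> A1 x y sub; have [g gy] := exists_neq y A1.
have ev : echo x y ([set y], [:: (x, [set g]); (y, [set g])]).
  by split=> //; apply: echo_step => //; apply: echo_end.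
by have [b] := sub _ ev.
Qed.

Lemma echo_free_test (b : bexp A) : echo_free (lang (KTest A b)).
Proof.
move=> x y sub.
have ev : echo x y ([set y], [:: (x, [set y])]) by split=> //; apply: echo_end.
by have [] := sub _ ev.
Qed.

End Generated.

Lemma generated_gdet_echo_free (O : list op) (A : finType) : 1 < #|A| ->
  (forall o, List.In o O -> deterministic (lang (op_e o))) ->
  (forall o, List.In o O -> #|{: 'I_(op_n o) * {set 'I_(nacts (op_e o))}}| < #|A|.-1) ->
  forall L : glang A A, generated O L -> gdet L /\ echo_free L.
Proof.
move=> A1 detO smallO L; elim=> {L} [p L HL|b L HL|o Ls bs L inO _ IH _ HL].
- split; first exact: gdet_ext HL (gdet_act _ p).
  by move=> x y sub; apply: (@echo_free_act _ p A1 x y) => v /sub /HL.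
- split; first exact: gdet_ext HL (gdet_test _ b).
  by move=> x y sub; apply: (@echo_free_test _ b x y) => v /sub /HL.
have DE := gdet_apply_t bs (deterministic_gdet (detO o inO)).
have DL i := (IH i).1.
split; first exact: gdet_ext HL (gdet_apply_s DE DL).
move=> x y sub.
apply: (echo_node_false (state := fun a c z => occ (op_e o) (tatom bs a) (tseq bs c) z) DE DL _
  (fun i => (IH i).2) (smallO o inO) (x0 := x) (m0 := y)).
- by move=> a1 c1 a2 c2 z b r; apply: occ_apply_t_swap.
- by move=> v /sub /HL.
Qed.

Lemma list_bound (B : Type) (f : B -> nat) (l : list B) :
  exists n, forall x, List.In x l -> f x < n.
Proof.
elim: l => [|y l [n IH]]; first by exists 0.
exists (maxn (f y).+1 n) => x /= [<-|/IH h]; rewrite leq_max ?leqnn //.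
by rewrite h orbT.
Qed.

Theorem theorem6p2 (O : list op) :
  (forall o, List.In o O -> deterministic (lang (op_e o))) ->
  exists k, 0 < k /\ ~ generated O (Lk k).
Proof.
move=> detO.
have [n small] := list_bound (fun o => #|{: 'I_(op_n o) * {set 'I_(nacts (op_e o))}}|) O.
exists n.+2; split=> // genLk.
have two_atoms : 1 < #|'I_n.+2| by rewrite card_ord.
have few_keys o : List.In o O ->
    #|{: 'I_(op_n o) * {set 'I_(nacts (op_e o))}}| < #|'I_n.+2|.-1.
  by rewrite card_ord => /small /ltnW.
have [_ free] := generated_gdet_echo_free two_atoms detO few_keys genLk.
by apply: (@free ord0 (@Ordinal n.+2 1 isT)) => v /echo_sub_Lk; apply.
Qed.
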